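(* Let $w$ be a factor of slope $\alpha$ and let $m$ be an abelian period of $w$ with $m\notin\mathcal{Q}_\alpha\cup\mathcal{M}_\alpha$. If $a_1\ge4$ and $(a_2-1)q_1+2<m<a_2q_1$, then $m$ is not the minimum abelian period of $w$.
   Context: $\alpha\in(0,1)$ irrational, $\alpha=[0;a_1,a_2,\ldots]$ with positive integers $a_i$, $a_1\ge2$; $q_{-1}=0$, $q_0=1$, $q_1=a_1$, $q_k=a_kq_{k-1}+q_{k-2}$ ($k\ge2$); for $k\ge2$, $1\le\ell<a_k$, $q_{k,\ell}=\ell q_{k-1}+q_{k-2}$. $\mathcal{Q}_\alpha=\{q_k:k\ge0\}\cup\{q_{k,\ell}: k\ge2,\ 1\le\ell<a_k\}$ and $\mathcal{M}_\alpha=\{tq_k: k\ge0,\ 1\le t\le a_{k+1}\}$. Sturmian words: on $\mathbb{T}=[0,1)$ with $R(\rho)=\{\rho+\alpha\}$ and either $I_0=[0,1-\alpha)$, $I_1=[1-\alpha,1)$ or $I_0=(0,1-\alpha]$, $I_1=(1-\alpha,1]$, $\mathbf{s}_{\rho,\alpha}$ has $n$-th letter $0$ iff $R^n(\rho)\in I_0$; all share the set $\mathcal{L}_\alpha$ of finite factors (factors of slope $\alpha$). Parikh vector of a binary word $u$: $(|u|_0,|u|_1)$; $P$ is contained in $Q$ if $P\le Q$ componentwise and $P\neq Q$. An abelian decomposition of $w$ is $w=u_0u_1\cdots u_{n-1}u_n$, $n\ge2$, with $u_1,\ldots,u_{n-1}$ of common Parikh vector $P$ and the Parikh vectors of $u_0,u_n$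 contained in $P$; the common length of $u_1,\dots,u_{n-1}$ is an abelian period; the minimum abelian period is the least one. *)

From Stdlib Require Import Reals.
From mathcomp Require Import ssreflect ssrfun ssrbool eqtype ssrnat seq.

Set Implicit Arguments.
Unset Strict Implicit.
Unset Printing Implicit Defensive.

(* Partial quotients are given by a : nat -> nat, with a i = a_i for i >= 1
   (a 0 is unused; alpha = [0; a_1, a_2, ...]). *)

(* pq a k = (p_k, q_k) together with (p_{k+1}, q_{k+1}). *)
Fixpoint pq2 (a : nat -> nat) (k : nat) : (nat * nat) * (nat * nat) :=
  match k with
  | 0 => ((0, 1), (1, a 1))
  | k'.+1 =>
      let: (x, y) := pq2 a k' in
      (y, (a k'.+2 * y.1 + x.1, a k'.+2 * y.2 + x.2)%N)
  end.

Definition cf_p (a : nat -> nat) (k : nat) : nat := (pq2 a k).1.1.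
Definition cf_q (a : nat -> nat) (k : nat) : nat := (pq2 a k).1.2.

Definition cf_expansion (a : nat -> nat) (alpha : R) : Prop :=
  (forall i, (1 <= i)%N -> (0 < a i)%N) /\
  Un_cv (fun k => (INR (cf_p a k) / INR (cf_q a k))%R) alpha.

Definition irrational (x : R) : Prop :=
  ~ (exists (u v : Z), v <> 0%Z /\ x = (IZR u / IZR v)%R).

Definition in_Q (a : nat -> nat) (m : nat) : Prop :=
  (exists k, m = cf_q a k) \/
  (exists k l, (2 <= k)%N /\ (1 <= l)%N /\ (l < a k)%N /\
               m = (l * cf_q a k.-1 + cf_q a k.-2)%N).

Definition in_M (a : nat -> nat) (m : nat) : Prop :=
  exists k t, (1 <= t)%N /\ (t <= a k.+1)%N /\ m = (t * cf_q a k)%N.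

(* Words over {0,1}: letter 0 is false, letter 1 is true. *)
Definition word := seq bool.

Definition frac (x : R) : R := (x - IZR (Int_part x))%R.

(* Letter n of s_{rho,alpha} with I_0 = [0,1-alpha), I_1 = [1-alpha,1). *)
Definition sturm_letter_lo (alpha rho : R) (n : nat) : bool :=
  if Rlt_dec (frac (rho + INR n * alpha)) (1 - alpha) then false else true.

(* Letter n of s_{rho,alpha} with I_0 = (0,1-alpha], I_1 = (1-alpha,1],
   the point 0 of T = [0,1) being identified with 1. *)
Definition sturm_letter_up (alpha rho : R) (n : nat) : bool :=
  let x := frac (rho + INR n * alpha) in
  if Rlt_dec 0 x then (if Rle_dec x (1 - alpha) then false else true)
  else true.

Definition factor_of_slope (alpha : R) (w : word) : Prop :=
  exists (rho : R) (i : nat),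
    (0 <= rho < 1)%R /\
    (w = mkseq (fun j => sturm_letter_lo alpha rho (i + j)) (size w) \/
     w = mkseq (fun j => sturm_letter_up alpha rho (i + j)) (size w)).

Definition parikh (u : word) : nat * nat := (count_mem false u, count_mem true u).

Definition pv_contained (P Q : nat * nat) : Prop :=
  (P.1 <= Q.1)%N /\ (P.2 <= Q.2)%N /\ P <> Q.

Definition abelian_period (w : word) (m : nat) : Prop :=
  exists (u0 un : word) (us : seq word) (P : nat * nat),
    w = u0 ++ flatten us ++ un /\ us <> [::] /\
    (forall u, u \in us -> parikh u = P /\ size u = m) /\
    pv_contained (parikh u0) P /\ pv_contained (parikh un) P.

Definition min_abelian_period (w : word) (m : nat) : Prop :=
  abelian_period w m /\ (forall m', abelian_period w m' -> (m <= m')%N).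

From Stdlib Require Import Reals Lra Lia ZArith.
From mathcomp Require Import ssreflect ssrfun ssrbool eqtype ssrnat seq path div zify.

(* Write q = q_1 = a_1.  A factor w of slope alpha is read off a sequence F with
   F n = floor (rho + n alpha) or ceil (rho + n alpha): the window [s, s + l) of w
   contains F (s + l) - F s ones.  As q alpha < 1, a window of length q holds at most
   one 1, and the windows of length q without any 1 ("zero windows") start at pairwise
   distance at least q_2 = a_1 a_2 + 1, by the best approximation property of q_1.
   Cut w along the abelian period m into k blocks with K ones each.  If K >= a_2, the
   zero windows inside the blocks force k = 1, so w is too short for four zero windows;
   if K < a_2, the density of ones bounds k by q - 3, and w, shorter than (k + 2) m, is
   too short for k + 3 zero windows.  Either way there are fewer than q zero windows,
   so some residue class mod q contains none of their starting points; cutting w into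
   q-blocks along it makes q < m an abelian period, with Parikh vector (q - 1, 1). *)

Lemma cf_p_rec a k : cf_p a k.+2 = a k.+2 * cf_p a k.+1 + cf_p a k.
Proof. by rewrite /cf_p /=; case: (pq2 a k) => [[? ?] [? ?]]. Qed.

Lemma cf_q_rec a k : cf_q a k.+2 = a k.+2 * cf_q a k.+1 + cf_q a k.
Proof. by rewrite /cf_q /=; case: (pq2 a k) => [[? ?] [? ?]]. Qed.

Lemma cf_q_gt0 a : (forall i, 1 <= i -> 0 < a i) -> forall k, 0 < cf_q a k.
Proof.
move=> a_gt0; suff: forall k, 0 < cf_q a k /\ 0 < cf_q a k.+1 by move=> h k; case: (h k).
elim=> [|k [_ IH]]; first by split=> //; apply: a_gt0.
by split=> //; rewrite cf_q_rec; have := a_gt0 k.+2 isT; lia.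
Qed.

Section Convergents.
Local Open Scope R_scope.

Lemma Rdiv_between (L U n d : R) : 0 < d -> (L <= n / d <= U <-> L * d <= n <= U * d).
Proof.
move=> d_gt0; have -> : n = n / d * d by field; lra.
set x := n / d * d / d; have -> : x = n / d by rewrite /x; field; lra.
split=> -[? ?]; split; try (apply: Rmult_le_compat_r; lra); exact: Rmult_le_reg_r d_gt0 _.
Qed.

Lemma mediant_between (c p q p' q' L U : R) : 0 <= c -> 0 < q -> 0 < q' ->
  L <= p / q <= U -> L <= p' / q' <= U ->
  L <= (c * p' + p) / (c * q' + q) <= U.
Proof.
move=> c_ge0 q_gt0 q'_gt0; rewrite !Rdiv_between //; first nra.
by rewrite Rplus_comm; apply: Rplus_lt_le_0_compat; last apply: Rmult_le_pos; lra.
Qed.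

Variables (a : nat -> nat) (alpha : R).
Hypothesis a_gt0 : forall i, (1 <= i)%N -> (0 < a i)%N.

Definition convergent k := INR (cf_p a k) / INR (cf_q a k).

Lemma convergent_between k : (1 <= k)%N -> convergent 2 <= convergent k <= convergent 1.
Proof.
have q_gt0 k' : 0 < INR (cf_q a k') by apply/lt_0_INR/ltP/cf_q_gt0.
have convergentSS k' : convergent k'.+2 =
    (INR (a k'.+2) * INR (cf_p a k'.+1) + INR (cf_p a k')) /
    (INR (a k'.+2) * INR (cf_q a k'.+1) + INR (cf_q a k')).
  by rewrite /convergent cf_p_rec cf_q_rec !plus_INR !mult_INR.
have convergent21 : convergent 2 <= convergent 1.
  have a1_ge1 : 1 <= INR (a 1) by apply: (le_INR 1); apply/leP/a_gt0.
  have a2_ge0 : 0 <= INR (a 2) by apply: pos_INR.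
  have q2_gt0 : 0 < INR (a 1) * (INR (a 2) * INR (a 1) + 1) by nra.
  rewrite convergentSS /convergent.
  change (cf_p a 1) with 1%N; change (cf_q a 1) with (a 1).
  change (cf_p a 0) with 0%N; change (cf_q a 0) with 1%N.
  have -> : (INR (a 2) * INR 1 + INR 0) / (INR (a 2) * INR (a 1) + INR 1) =
            INR 1 / INR (a 1) - / (INR (a 1) * (INR (a 2) * INR (a 1) + 1)).
    by rewrite /=; field; split; nra.
  by have := Rinv_0_lt_compat _ q2_gt0; lra.
suff: (1 <= k)%N -> convergent 2 <= convergent k <= convergent 1 /\
      convergent 2 <= convergent k.+1 <= convergent 1 by move=> h /h [].
elim: k => [|[|k] IH] // _; first lra.
have [IHk IHk1] := IH isT; split=> //.
rewrite [convergent k.+3]convergentSS.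
exact: mediant_between (pos_INR _) (q_gt0 _) (q_gt0 _) IHk IHk1.
Qed.

Lemma Un_cv_const (c : R) : Un_cv (fun=> c) c.
Proof. by move=> eps eps_gt0; exists 0%N => n _; rewrite R_dist_eq. Qed.

Lemma convergent_irrational_between : irrational alpha -> Un_cv convergent alpha ->
  convergent 2 < alpha < convergent 1.
Proof.
move=> alpha_irr cv_alpha.
have cv_alpha1 := CV_shift' _ 1 _ cv_alpha.
have lower : convergent 2 <= alpha.
  apply: (Rle_cv_lim _ (Un_cv_const _) cv_alpha1) => n.
  by have [] := convergent_between n.+1 isT; rewrite Nat.add_1_r.
have upper : alpha <= convergent 1.
  apply: (Rle_cv_lim _ cv_alpha1 (Un_cv_const _)) => n.
  by have [] := convergent_between n.+1 isT; rewrite Nat.add_1_r.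
have neq k : alpha <> convergent k.
  move=> alpha_eq; apply: alpha_irr.
  exists (Z.of_nat (cf_p a k)), (Z.of_nat (cf_q a k)); split.
  - by have := @cf_q_gt0 a a_gt0 k; lia.
  - by rewrite alpha_eq /convergent -!INR_IZR_INZ.
by have := neq 1%N; have := neq 2%N; lra.
Qed.

Lemma first_quotients_alpha_bounds : irrational alpha -> Un_cv convergent alpha ->
  INR (a 1) * alpha < 1 /\ INR (a 2) < alpha * INR (a 1 * a 2 + 1).
Proof.
move=> alpha_irr cv_alpha.
have [] := convergent_irrational_between alpha_irr cv_alpha.
have a1_gt0 : 0 < INR (a 1) by apply/lt_0_INR/ltP/a_gt0.
have q2_gt0 : 0 < INR (a 1 * a 2 + 1) by apply/lt_0_INR/ltP; lia.
rewrite /convergent cf_p_rec cf_q_rec.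
change (cf_p a 1) with 1%N; change (cf_q a 1) with (a 1).
change (cf_p a 0) with 0%N; change (cf_q a 0) with 1%N.
rewrite muln1 addn0 mulnC /= => lower upper; split.
- by move: upper => /(Rmult_lt_compat_l _ _ _ a1_gt0); rewrite /Rdiv Rmult_1_l Rinv_r; lra.
- by move: lower => /(Rmult_lt_compat_r _ _ _ q2_gt0); rewrite /Rdiv Rmult_assoc Rinv_l; lra.
Qed.
End Convergents.

Lemma INR_addn m n : INR (m + n) = (INR m + INR n)%R. Proof. exact: plus_INR. Qed.
Lemma INR_muln m n : INR (m * n) = (INR m * INR n)%R. Proof. exact: mult_INR. Qed.

Section Spacing.
Local Open Scope R_scope.

Lemma far_from_integers (x delta : R) (c n : Z) :
  delta <= x - IZR c <= 1 - delta -> delta <= Rabs (x - IZR n).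
Proof.
move=> x_c; have := Rle_abs (x - IZR n); have := Rle_abs (- (x - IZR n)).
rewrite Rabs_Ropp; case: (Z.le_gt_cases n c) => [/IZR_le | n_gt_c]; first lra.
have : IZR c + 1 <= IZR n by rewrite -plus_IZR; apply: IZR_le; lia.
lra.
Qed.

(* For [q = a_1], [q * a2 + 1 = q_2]: the best approximation property
   [||d alpha|| >= ||q_1 alpha||] for [0 < d < q_2]. *)
Lemma multiple_far_from_integers (q a2 d : nat) (alpha : R) (n : Z) :
  0 < alpha -> INR q * alpha < 1 -> INR a2 < alpha * INR (q * a2 + 1) ->
  (0 < d < q * a2 + 1)%N -> 1 - INR q * alpha <= Rabs (INR d * alpha - IZR n).
Proof.
move=> alpha_gt0 q_alpha a2_lt /andP[d_gt0 d_lt].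
have q_gt0 : (0 < q)%N by rewrite lt0n; apply/eqP => q0; move: d_lt; rewrite q0 mul0n; lia.
have d_eq := divn_eq d q.
set t := d %/ q in d_eq; set u := d %% q in d_eq.
have u_lt : (u < q)%N by rewrite ltn_mod.
have INR_d : INR d = INR t * INR q + INR u by rewrite d_eq INR_addn INR_muln.
rewrite INR_addn INR_muln /= in a2_lt.
have t_ge0 := pos_INR t.
have q_ge1 : 1 <= INR q by apply: (le_INR 1); apply/leP.
case: (posnP u) => [u_eq0 | u_gt0].
- have t_ge1 : 1 <= INR t by apply: (le_INR 1); apply/leP; move: d_eq d_gt0; rewrite u_eq0; nia.
  have t_le : INR t <= INR a2 by apply/le_INR/leP; move: d_eq d_lt; rewrite u_eq0; nia.
  apply: (@far_from_integers _ _ (Z.of_nat t - 1)%Z).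
  rewrite minus_IZR -INR_IZR_INZ INR_d u_eq0 /=; nra.
- have u_ge1 : 1 <= INR u by apply: (le_INR 1); apply/leP.
  have u_le : INR u + 1 <= INR q by rewrite -S_INR; apply/le_INR/leP.
  have t_lt : INR t + 1 <= INR a2 by rewrite -S_INR; apply/le_INR/leP; nia.
  apply: (@far_from_integers _ _ (Z.of_nat t)).
  rewrite -INR_IZR_INZ INR_d; nra.
Qed.
End Spacing.

Lemma count_false_add_true (u : word) : count_mem false u + count_mem true u = size u.
Proof. by elim: u => [|[] u IH] //=; rewrite -IH ?add0n ?add1n ?addnS ?addSn. Qed.

Lemma size_lt_pv_contained (u v : word) :
  pv_contained (parikh u) (parikh v) -> size u < size v.
Proof.
rewrite /pv_contained /parikh -!count_false_add_true /= => -[le0 [le1 neq]].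
rewrite ltn_neqAle leq_add // andbT; apply/eqP => eq_sizes; apply: neq.
by congr pair; lia.
Qed.

Lemma pv_contained_unit (u : word) q :
  size u < q -> count_mem true u <= 1 -> pv_contained (parikh u) (q.-1, 1).
Proof.
rewrite /pv_contained /parikh -count_false_add_true /= => lt_q le1.
by split; [lia | split=> // -[]; lia].
Qed.

Lemma sumn_map_const (T : eqType) (f : T -> nat) c (s : seq T) :
  {in s, forall x, f x = c} -> sumn (map f s) = size s * c.
Proof.
elim: s => //= x s IH f_c; rewrite f_c ?mem_head // IH // => y y_s.
by rewrite f_c // inE y_s orbT.
Qed.

Lemma abelian_period_split (w : word) m : abelian_period w m ->
  exists o k e K, [/\ size w = o + k * m + e, o < m, e < m, 0 < k &
                      count_mem true (take (k * m) (drop o w)) = k * K].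
Proof.
move=> [u0 [un [us [P [-> [us_nil [us_P [u0_P un_P]]]]]]]].
have k_gt0 : 0 < size us by rewrite lt0n size_eq0; apply/eqP.
have [u_P u_m] := us_P _ (mem_nth [::] k_gt0).
have size_flatten_us : size (flatten us) = size us * m.
  by rewrite size_flatten (@sumn_map_const _ _ m) // => v /us_P[].
exists (size u0), (size us), (size un), P.2; split.
- by rewrite !size_cat size_flatten_us addnA.
- by rewrite -u_m; apply: size_lt_pv_contained; rewrite u_P.
- by rewrite -u_m; apply: size_lt_pv_contained; rewrite u_P.
- by [].
rewrite drop_size_cat // -size_flatten_us take_size_cat // count_flatten.
by rewrite (@sumn_map_const _ _ P.2) // => v /us_P[<-].
Qed.

Lemma flatten_reshape_cat {T : Type} (sh : seq nat) (s : seq T) :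
  flatten (reshape sh s) ++ drop (sumn sh) s = s.
Proof.
elim: sh s => [|n sh IH] s /=; first by rewrite drop0.
by rewrite -catA addnC -drop_drop IH cat_take_drop.
Qed.

Lemma mem_reshape_nseq {T : eqType} k q (s u : seq T) :
  u \in reshape (nseq k q) s -> exists2 j, j < k & u = take q (drop (j * q) s).
Proof.
elim: k s => [|k IH] s //=; rewrite inE => /orP[/eqP-> | /IH[j j_lt ->]].
  by exists 0; rewrite ?drop0.
by exists j.+1; rewrite // drop_drop mulSn addnC.
Qed.

Lemma abelian_period_unit_blocks (w : word) q o : o < q -> o + q <= size w ->
  (forall s len, s + len <= size w -> len < q -> count_mem true (take len (drop s w)) <= 1) ->
  (forall j, o + j.+1 * q <= size w -> count_mem true (take q (drop (o + j * q) w)) = 1) ->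
  abelian_period w q.
Proof.
move=> o_lt oq_le short_le1 block_eq1.
set k := (size w - o) %/ q.
have k_gt0 : 0 < k by rewrite divn_gt0 //; lia.
have kq_le : k * q <= size w - o := leq_divM _ _.
have kq_gt : size w - o < k * q + q.
  by rewrite {1}(divn_eq (size w - o) q) ltn_add2l ltn_mod; lia.
exists (take o w), (drop (sumn (nseq k q)) (drop o w)), (reshape (nseq k q) (drop o w)), (q.-1, 1).
split; last split; last split; last split.
- by rewrite flatten_reshape_cat cat_take_drop.
- by move/(congr1 size); rewrite size_reshape size_nseq /=; lia.
- move=> u /mem_reshape_nseq[j j_lt ->]; rewrite drop_drop addnC.
  have block_le : o + j.+1 * q <= size w by have := leq_mul j_lt (leqnn q); lia.
  have size_block : size (take q (drop (o + j * q) w)) = q.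
    by rewrite size_takel // size_drop; rewrite mulSn in block_le; lia.
  have zeros : count_mem false (take q (drop (o + j * q) w)) = q.-1.
    have := count_false_add_true (take q (drop (o + j * q) w)).
    by rewrite block_eq1 // size_block => sum_q; rewrite -[in RHS]sum_q addn1.
  by rewrite /parikh zeros block_eq1.
- apply: pv_contained_unit; first by rewrite size_takel //; lia.
  by rewrite -(drop0 w); apply: short_le1; lia.
- rewrite sumn_nseq drop_drop.
  apply: pv_contained_unit; first by rewrite size_drop; lia.
  by rewrite -(take_size (drop _ w)) size_drop; apply: short_le1; lia.
Qed.

Section Mechanical.
Local Open Scope R_scope.

Definition mechanical (F : nat -> Z) (alpha : R) :=
  forall x y, (IZR (F x) - INR x * alpha) - (IZR (F y) - INR y * alpha) < 1.

Lemma mechanical_shift {F alpha} i :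
  mechanical F alpha -> mechanical (fun n => F (i + n)%N) alpha.
Proof. by move=> F_mech x y; have := F_mech (i + x)%N (i + y)%N; rewrite !INR_addn; lra. Qed.

Lemma mechanical_floor rho alpha : mechanical (fun n => Int_part (rho + INR n * alpha)) alpha.
Proof.
move=> x y; have := base_Int_part (rho + INR x * alpha).
by have := base_Int_part (rho + INR y * alpha); lra.
Qed.

Lemma mechanical_ceil rho alpha :
  mechanical (fun n => - Int_part (- (rho + INR n * alpha)))%Z alpha.
Proof.
move=> x y; rewrite !opp_IZR; have := base_Int_part (- (rho + INR x * alpha)).
by have := base_Int_part (- (rho + INR y * alpha)); lra.
Qed.

Lemma sturm_letter_lo_floor alpha rho n : 0 < alpha < 1 ->
  Z.b2z (sturm_letter_lo alpha rho n) =
  (Int_part (rho + INR n.+1 * alpha) - Int_part (rho + INR n * alpha))%Z.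
Proof.
move=> alpha_01; rewrite /sturm_letter_lo /frac S_INR.
set x := rho + INR n * alpha; have -> : rho + (INR n + 1) * alpha = x + alpha by rewrite /x; ring.
have [Ix_le Ix_gt] := base_Int_part x.
case: Rlt_dec => x_frac.
- by rewrite -(Int_part_spec (x + alpha) (Int_part x)) /=; [lia | lra].
- rewrite -(Int_part_spec (x + alpha) (Int_part x + 1)) /=; first lia.
  by rewrite plus_IZR; lra.
Qed.

Lemma sturm_letter_up_ceil alpha rho n : 0 < alpha < 1 ->
  Z.b2z (sturm_letter_up alpha rho n) =
  (- Int_part (- (rho + INR n.+1 * alpha)) - - Int_part (- (rho + INR n * alpha)))%Z.
Proof.
move=> alpha_01; rewrite /sturm_letter_up /frac S_INR.
set x := rho + INR n * alpha; have -> : rho + (INR n + 1) * alpha = x + alpha by rewrite /x; ring.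
have [Ix_le Ix_gt] := base_Int_part x.
have ceil_eq y z : IZR z - 1 < y <= IZR z -> (- Int_part (- y))%Z = z.
  by move=> y_z; rewrite -(Int_part_spec (- y) (- z)) ?opp_IZR; [lia | lra].
case: Rlt_dec => [x_frac_gt0 | x_int].
- rewrite (ceil_eq x (Int_part x + 1)%Z); last by rewrite plus_IZR; lra.
  case: Rle_dec => x_frac.
  + by rewrite (ceil_eq (x + alpha) (Int_part x + 1)%Z) /=; [lia | rewrite plus_IZR; lra].
  + by rewrite (ceil_eq (x + alpha) (Int_part x + 2)%Z) /=; [lia | rewrite plus_IZR; lra].
- rewrite (ceil_eq x (Int_part x)); last lra.
  by rewrite (ceil_eq (x + alpha) (Int_part x + 1)%Z) /=; [lia | rewrite plus_IZR; lra].
Qed.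

End Mechanical.

Lemma factor_of_slope_mechanical {alpha} {w : word} : (0 < alpha < 1)%R ->
  factor_of_slope alpha w -> exists F, mechanical F alpha /\
    forall j, j < size w -> Z.b2z (nth false w j) = (F j.+1 - F j)%Z.
Proof.
move=> alpha_01 [rho [i [_ [w_eq | w_eq]]]].
- exists (fun n => Int_part (rho + INR (i + n) * alpha)); split.
    exact: (mechanical_shift i (mechanical_floor rho alpha)).
  by move=> j j_lt; rewrite w_eq nth_mkseq // sturm_letter_lo_floor // addnS.
- exists (fun n => - Int_part (- (rho + INR (i + n) * alpha)))%Z; split.
    exact: (mechanical_shift i (mechanical_ceil rho alpha)).
  by move=> j j_lt; rewrite w_eq nth_mkseq // sturm_letter_up_ceil // addnS.
Qed.

Lemma block_count_bound {k m q a2} : 4 <= q -> 0 < a2 -> (a2 - 1) * q + 3 <= m ->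
  k * m * a2 < (k * (a2 - 1) + 1) * (q * a2 + 1) -> k + 3 <= q.
Proof.
case: a2 => [//|b] q_ge4 _ m_ge lt; rewrite subn1 /= in m_ge lt.
have {lt m_ge} : k * (b * q + 3) * b.+1 < (k * b + 1) * (q * b.+1 + 1).
  by apply: leq_ltn_trans lt; rewrite leq_mul2r leq_mul2l m_ge !orbT.
nia.
Qed.

Section ZeroWindows.
Variables (F : nat -> Z) (alpha : R) (q : nat).
Hypothesis F_mech : mechanical F alpha.
Hypothesis alpha_gt0 : (0 < alpha)%R.
Hypothesis q_gt0 : 0 < q.
Hypothesis q_alpha_lt1 : (INR q * alpha < 1)%R.

Lemma F_diff_bounds x y :
  ((INR y - INR x) * alpha - 1 < IZR (F y - F x) < (INR y - INR x) * alpha + 1)%R.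
Proof. by rewrite minus_IZR; have := F_mech x y; have := F_mech y x; lra. Qed.

Lemma F_mono {x y} : x <= y -> (F x <= F y)%Z.
Proof.
move=> /leP/le_INR x_le_y; have [F_gt _] := F_diff_bounds x y.
have : (-1 < IZR (F y - F x))%R by nra.
by move/lt_IZR; lia.
Qed.

Lemma q_mul_F_diff_le {x y} : x <= y ->
  (Z.of_nat q * (F y - F x) <= Z.of_nat (y - x) + Z.of_nat q - 1)%Z.
Proof.
move=> x_le_y; have [_ F_lt] := F_diff_bounds x y.
have q_pos : (0 < INR q)%R by apply/lt_0_INR/ltP.
have yx_ge0 : (0 <= INR y - INR x)%R by have := le_INR _ _ (elimT leP x_le_y); lra.
have : (INR q * IZR (F y - F x) < INR (y - x) + INR q)%R.
  rewrite minus_INR; last exact/leP.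
  by apply: Rlt_le_trans (Rmult_lt_compat_l _ _ _ q_pos F_lt) _; nra.
by rewrite !INR_IZR_INZ -mult_IZR -plus_IZR => /lt_IZR; lia.
Qed.

(* Given [letters] below: the [q] letters of [w] from position [s] are all 0. *)
Definition zero_window s := (F (s + q) =? F s)%Z.

Lemma zero_windows_close {s s'} : zero_window s -> zero_window s' ->
  (Rabs (IZR (F s' - F s) - (INR s' - INR s) * alpha) < 1 - INR q * alpha)%R.
Proof.
move=> /Z.eqb_eq Fs /Z.eqb_eq Fs'; rewrite minus_IZR; apply: Rabs_def1.
- by have := F_mech s' (s + q); rewrite Fs INR_addn; lra.
- by have := F_mech s (s' + q); rewrite Fs' INR_addn; lra.
Qed.

Variable a2 : nat.
Hypothesis a2_gt0 : 0 < a2.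
Hypothesis a2_alpha : (INR a2 < alpha * INR (q * a2 + 1))%R.

Lemma zero_windows_sep {s s'} : s < s' -> zero_window s -> zero_window s' ->
  s + (q * a2 + 1) <= s'.
Proof.
move=> s_lt ws ws'; rewrite leqNgt; apply/negP => s'_close.
have := zero_windows_close ws ws'.
have := @multiple_far_from_integers q a2 (s' - s) alpha (F s' - F s) alpha_gt0 q_alpha_lt1
  a2_alpha ltac:(apply/andP; split; lia).
by rewrite Rabs_minus_sym minus_INR; [lra | apply/leP; lia].
Qed.

Variable w : word.
Hypothesis letters : forall j, j < size w -> Z.b2z (nth false w j) = (F j.+1 - F j)%Z.

Lemma count_ones_slice {s len} : s + len <= size w ->
  Z.of_nat (count_mem true (take len (drop s w))) = (F (s + len) - F s)%Z.
Proof.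
elim: len => [|len IH] le_size; first by rewrite take0 addn0 /=; lia.
rewrite (take_nth false) ?size_drop; last lia.
rewrite -cats1 count_cat nth_drop addnS Nat2Z.inj_add IH; last lia.
by have := letters (s + len) ltac:(lia); case: nth => /=; lia.
Qed.

Lemma count_ones_short {s len} : s + len <= size w -> len <= q ->
  count_mem true (take len (drop s w)) <= 1.
Proof.
move=> le_size len_le; have := q_mul_F_diff_le (leq_addr len s).
by rewrite -count_ones_slice // addKn; nia.
Qed.

Lemma count_ones_window s : s + q <= size w -> ~~ zero_window s ->
  count_mem true (take q (drop s w)) = 1.
Proof.
move=> le_size /negP nonzero; have := count_ones_short le_size (leqnn q).
have := count_ones_slice le_size; have := F_mono (leq_addr q s).
have : F (s + q) <> F s by move=> F_eq; apply: nonzero; apply/Z.eqb_eq.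
lia.
Qed.

Definition zero_windows := [seq s <- iota 0 (size w) | (s + q <= size w) && zero_window s].

Lemma mem_zero_windows s : (s \in zero_windows) = (s + q <= size w) && zero_window s.
Proof.
rewrite mem_filter mem_iota add0n /=.
by case: (leqP (s + q) (size w)) => //= le_size; rewrite [s < _](_ : _ = true) ?andbT //; lia.
Qed.

Lemma zero_windows_nth i : i < size zero_windows ->
  nth 0 zero_windows i + q <= size w /\ zero_window (nth 0 zero_windows i).
Proof. by move=> /(mem_nth 0); rewrite mem_zero_windows => /andP. Qed.

Lemma zero_windows_spread i d : i + d < size zero_windows ->
  nth 0 zero_windows i + d * (q * a2 + 1) <= nth 0 zero_windows (i + d).
Proof.
elim: d => [|d IH] lt_size; first by rewrite mul0n !addn0.
have sorted_zw : sorted ltn zero_windows.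
  by apply: sorted_filter; [exact: ltn_trans | exact: iota_ltn_sorted].
have lt_next : nth 0 zero_windows (i + d) < nth 0 zero_windows (i + d).+1.
  by apply: (sorted_ltn_nth ltn_trans 0 sorted_zw); rewrite ?inE //; lia.
have [_ zw_cur] := zero_windows_nth (i + d) ltac:(lia).
have [_ zw_next] := zero_windows_nth (i + d).+1 ltac:(lia).
have := zero_windows_sep lt_next zw_cur zw_next; have := IH ltac:(lia).
by rewrite [i + d.+1]addnS mulSn; lia.
Qed.

Lemma zero_windows_count p t lo hi : p + t < size zero_windows ->
  lo <= nth 0 zero_windows p -> nth 0 zero_windows (p + t) + q <= hi ->
  (Z.of_nat q * (F hi - F lo) + Z.of_nat t.+1 <= Z.of_nat (hi - lo) + Z.of_nat q - 1)%Z.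
Proof.
elim: t p lo => [|t IH] p lo lt_size lo_le hi_ge;
  have [_ /Z.eqb_eq zw_p] := zero_windows_nth p ltac:(lia);
  have head_bound := q_mul_F_diff_le lo_le.
- rewrite addn0 in hi_ge; have := @q_mul_F_diff_le (nth 0 zero_windows p + q) hi hi_ge.
  by rewrite zw_p; lia.
- have := zero_windows_spread p 1 ltac:(lia).
  have qa2_ge : q <= q * a2 + 1 by nia.
  rewrite [p + 1]addn1 mul1n => next_ge.
  have := IH p.+1 (nth 0 zero_windows p + q) ltac:(lia) ltac:(lia).
  have := zero_windows_spread p t.+1 lt_size; rewrite mulSn => spread.
  by rewrite addSnnS zw_p => /(_ hi_ge); lia.
Qed.

Lemma size_zero_windows_le : q < size w -> size zero_windows <= size w - q.
Proof.
move=> q_lt; case: (posnP (size zero_windows)) => [-> // | size_gt0].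
have := zero_windows_spread 0 (size zero_windows).-1 ltac:(lia).
have [last_le _] := zero_windows_nth (size zero_windows).-1 ltac:(lia).
rewrite add0n; nia.
Qed.

Lemma abelian_period_few_zero_windows : size zero_windows < q -> q < size w ->
  abelian_period w q.
Proof.
move=> few_zw q_lt; have zw_le := size_zero_windows_le q_lt.
have : ~~ all (fun c => c \in map (modn^~ q) zero_windows) (iota 0 (minn q (size w - q).+1)).
  apply/negP => /allP/(uniq_leq_size (iota_uniq _ _)).
  by rewrite size_map size_iota; lia.
case/allPn => o; rewrite mem_iota add0n /= leq_min => /andP[o_lt_q o_le] o_free.
apply: (@abelian_period_unit_blocks _ _ o) => //; first lia.
- by move=> s len le_size /ltnW; apply: count_ones_short.
- move=> j le_size; apply: count_ones_window; first by rewrite mulSn in le_size; lia.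
  apply/negP => zw; move/negP: o_free; apply; apply/mapP; exists (o + j * q).
    by rewrite mem_zero_windows zw andbT; rewrite mulSn in le_size; lia.
  by rewrite addnC modnMDl modn_small.
Qed.

Section Blocks.
Variables (m o k e K : nat).
Hypothesis q_ge4 : 4 <= q.
Hypothesis m_gt : (a2 - 1) * q + 2 < m.
Hypothesis m_lt : m < a2 * q.
Hypothesis size_w : size w = o + k * m + e.
Hypothesis o_lt : o < m.
Hypothesis e_lt : e < m.
Hypothesis k_gt0 : 0 < k.
Hypothesis blocks_ones : (F (o + k * m) - F o = Z.of_nat (k * K))%Z.

Lemma zero_windows_large i : i < size zero_windows ->
  i * (q * a2 + 1) + q <= nth 0 zero_windows i + q <= o + k * m + e.
Proof.
move=> i_lt; have := zero_windows_spread 0 i i_lt.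
by have [+ _] := zero_windows_nth i i_lt; rewrite size_w add0n; lia.
Qed.

Lemma few_zero_windows_many_ones : a2 <= K -> size zero_windows < q.
Proof.
rewrite ltnNge => a2_le; apply/negP => many.
have [r q_eq] : exists r, q = r + 3 by exists (q - 3); lia.
have [first_ge _] := andP (zero_windows_large 1 ltac:(lia)).
have next_ge := zero_windows_spread (1 + r) 1 ltac:(lia).
have [_ next_le] := andP (zero_windows_large (1 + r + 1) ltac:(lia)).
have := zero_windows_count 1 r o (o + k * m) ltac:(lia) ltac:(lia) ltac:(lia).
rewrite addKn blocks_ones => count_le.
have k_le : k * m.+1 <= q * (k * K).
  by rewrite mulnCA leq_mul2l (leq_trans m_lt) ?orbT // mulnC leq_mul2l a2_le orbT.
have k_eq1 : k = 1 by nia.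
by have := zero_windows_large 3 ltac:(lia); rewrite k_eq1; nia.
Qed.

Lemma few_zero_windows_few_ones : K < a2 -> size zero_windows < q.
Proof.
move=> K_lt; have [ones_gt _] := F_diff_bounds o (o + k * m).
rewrite blocks_ones -INR_IZR_INZ INR_addn in ones_gt.
have km_lt : k * m * a2 < (k * (a2 - 1) + 1) * (q * a2 + 1).
  apply/ltP/INR_lt; rewrite INR_muln [INR ((_ + 1) * _)]INR_muln.
  have Q_gt0 : (0 < INR (q * a2 + 1))%R by apply/lt_0_INR/ltP; lia.
  have km_gt0 : (0 < INR (k * m))%R by apply/lt_0_INR/ltP; nia.
  have ones_le : (INR (k * K) <= INR (k * (a2 - 1)))%R by apply/le_INR/leP; nia.
  have km_alpha : (INR (k * m) * alpha < INR (k * (a2 - 1) + 1))%R.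
    by rewrite INR_addn /=; lra.
  apply: (Rlt_trans _ (INR (k * m) * (alpha * INR (q * a2 + 1)))).
    exact: Rmult_lt_compat_l.
  by rewrite -Rmult_assoc; apply: Rmult_lt_compat_r.
have k_le : k + 3 <= q by apply: (block_count_bound q_ge4 a2_gt0 _ km_lt); lia.
rewrite ltnNge; apply/negP => many.
by have := zero_windows_large (k + 2) ltac:(lia); nia.
Qed.
End Blocks.

Lemma abelian_period_first_denominator m : 4 <= q -> 1 < a2 ->
  (a2 - 1) * q + 2 < m -> m < a2 * q -> abelian_period w m -> abelian_period w q.
Proof.
move=> q_ge4 a2_gt1 m_gt m_lt /abelian_period_split[o [k [e [K [size_w o_lt e_lt k_gt0 ones]]]]].
have blocks_ones : (F (o + k * m) - F o = Z.of_nat (k * K))%Z.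
  by rewrite -ones count_ones_slice //; lia.
apply: abelian_period_few_zero_windows; last by nia.
case: (leqP a2 K) => [many | few].
- exact: (@few_zero_windows_many_ones m o k e K).
- exact: (@few_zero_windows_few_ones m o k e K).
Qed.
End ZeroWindows.

Theorem lemma5p4 (a : nat -> nat) (alpha : R)
  (Halpha : (0 < alpha < 1)%R) (Hirr : irrational alpha)
  (Hcf : cf_expansion a alpha) (Ha1 : (2 <= a 1)%N)
  (w : word) (m : nat)
  (Hw : factor_of_slope alpha w) (Hm : abelian_period w m)
  (HQ : ~ in_Q a m) (HM : ~ in_M a m)
  (Ha1' : (4 <= a 1)%N)
  (Hlo : ((a 2 - 1) * cf_q a 1 + 2 < m)%N) (Hhi : (m < a 2 * cf_q a 1)%N) :
  ~ min_abelian_period w m.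
Proof.
move=> [_ m_min]; have [a_gt0 cv_alpha] := Hcf.
change (cf_q a 1) with (a 1) in Hlo, Hhi.
have [a1_alpha a2_alpha] := @first_quotients_alpha_bounds a alpha a_gt0 Hirr cv_alpha.
have a2_gt1 : (1 < a 2)%N.
  rewrite ltnNge; apply/negP => a2_le1; apply: HM; exists 0%N, m.
  have a2_eq1 : a 2 = 1%N by have := a_gt0 2%N isT; lia.
  by move: Hhi; rewrite a2_eq1 mul1n; change (cf_q a 0) with 1%N; lia.
have [F [F_mech letters]] := factor_of_slope_mechanical Halpha Hw.
have period_a1 : abelian_period w (a 1).
  have alpha_gt0 : (0 < alpha)%R by case: Halpha.
  apply: (abelian_period_first_denominator _ _ _ F_mech alpha_gt0 _ a1_alpha _ _ a2_alpha
            _ letters _ Ha1' a2_gt1 Hlo Hhi Hm); lia.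
by have := m_min _ period_a1; nia.
Qed.
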